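(* Let $G$ be a topological group carrying the final locally quasi-convex group topology with respect to a family of group homomorphisms $(u_i:G_i\to G)_{i\in I}$, where every $G_i$ is a $g$-barrelled topological group. Then $G$ is $g$-barrelled.
   Context: All groups are abelian. $\mathbb T=\mathbb R/\mathbb Z$, $\mathbb T_+=\rho([-1/4,1/4])$ where $\rho:\mathbb R\to\mathbb T$ is the quotient map. For a topological group $G$, $\Gamma G$ is the group of continuous homomorphisms $G\to\mathbb T$, and $\Gamma_s G$ is $\Gamma G$ with the topology of pointwise convergence. A set $M\subseteq\Gamma G$ is equicontinuous if for every zero neighbourhood $U$ of $\mathbb T$ there is a zero neighbourhood $V$ of $G$ with $\varphi(V)\subseteq U$ for all $\varphi\in M$. $G$ is $g$-barrelled if every compact subset of $\Gamma_s G$ is equicontinuous. A subset $A$ of a topological group $G$ is quasi-convex if for every $x\notin A$ there is a continuous character $\varphi$ with $\varphi(A)\subseteq\mathbb T_+$ and $\varphi(x)\notin\mathbb T_+$. A topological group is locally quasi-convex if it has a zero neighbourhood base of quasi-convex sets. The final locally quasi-convex group topology with respect to $(u_i)$ is the finest locally quasi-convex group topology on $G$ making all $u_i$ continuous. *)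

From Stdlib Require Import Reals List.
Open Scope R_scope.

Definition set (X : Type) := X -> Prop.

Record AbGroup := {
  gcar :> Type;
  gadd : gcar -> gcar -> gcar;
  gzero : gcar;
  gopp : gcar -> gcar;
  gaddA : forall x y z, gadd x (gadd y z) = gadd (gadd x y) z;
  gaddC : forall x y, gadd x y = gadd y x;
  gadd0 : forall x, gadd gzero x = x;
  gaddN : forall x, gadd (gopp x) x = gzero
}.
Arguments gadd {_}. Arguments gzero {_}. Arguments gopp {_}.

Record is_topology (X : Type) (op : set X -> Prop) : Prop := {
  top_full : op (fun _ => True);
  top_inter : forall A B, op A -> op B -> op (fun x => A x /\ B x);
  top_union : forall (J : Type) (F : J -> set X),
      (forall j, op (F j)) -> op (fun x => exists j, F j x)
}.

(** Group topology: topology for which (x,y) |-> x - y is continuous *)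
Definition is_group_topology (G : AbGroup) (op : set G -> Prop) : Prop :=
  is_topology G op /\
  forall (U : set G) (x y : G), op U -> U (gadd x (gopp y)) ->
    exists A B : set G, op A /\ op B /\ A x /\ B y /\
      forall a b, A a -> B b -> U (gadd a (gopp b)).

Record TopGroup := {
  tgrp :> AbGroup;
  topen : set tgrp -> Prop;
  topen_ax : is_group_topology tgrp topen
}.

Definition nbhd0 (G : AbGroup) (op : set G -> Prop) (V : set G) : Prop :=
  exists U, op U /\ U gzero /\ (forall x, U x -> V x).

(** The circle group T = R/Z, elements represented by reals in [0,1). *)
Definition frac (r : R) : R := r - IZR (Int_part r).
Definition inT (t : R) : Prop := 0 <= t < 1.
Definition Tadd (s t : R) : R := frac (s + t).
(* the quotient metric on T = R/Z for representatives in [0,1) *)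
Definition dT (s t : R) : R := Rmin (Rabs (s - t)) (1 - Rabs (s - t)).
(* T_+ = rho([-1/4,1/4]) *)
Definition Tplus (t : R) : Prop := inT t /\ (t <= 1/4 \/ 3/4 <= t).
Definition nbhd0_T (U : set R) : Prop :=
  exists eps, 0 < eps /\ forall t, inT t -> dT t 0 < eps -> U t.

Definition is_char (G : AbGroup) (op : set G -> Prop) (phi : G -> R) : Prop :=
  (forall x, inT (phi x)) /\
  (forall x y, phi (gadd x y) = Tadd (phi x) (phi y)) /\
  (forall (x : G) eps, 0 < eps ->
     exists U, op U /\ U x /\ forall y, U y -> dT (phi y) (phi x) < eps).

(** Gamma_s G : topology of pointwise convergence on the characters *)
Definition open_s (G : AbGroup) (op : set G -> Prop) (U : set (G -> R)) : Prop :=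
  (forall phi, U phi -> is_char G op phi) /\
  forall phi, U phi -> exists (xs : list G) eps, 0 < eps /\
    forall psi, is_char G op psi ->
      (forall x, In x xs -> dT (psi x) (phi x) < eps) -> U psi.

Definition compact_s (G : AbGroup) (op : set G -> Prop) (K : set (G -> R)) : Prop :=
  (forall phi, K phi -> is_char G op phi) /\
  forall (J : Type) (F : J -> set (G -> R)),
    (forall j, open_s G op (F j)) ->
    (forall phi, K phi -> exists j, F j phi) ->
    exists l : list J, forall phi, K phi -> exists j, In j l /\ F j phi.

Definition equicontinuous (G : AbGroup) (op : set G -> Prop) (M : set (G -> R)) : Prop :=
  forall U : set R, nbhd0_T U ->
    exists V, nbhd0 G op V /\ forall phi v, M phi -> V v -> U (phi v).

Definition g_barrelled (G : TopGroup) : Prop :=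
  forall K, compact_s G (topen G) K -> equicontinuous G (topen G) K.

Definition quasi_convex (G : AbGroup) (op : set G -> Prop) (A : set G) : Prop :=
  forall x, ~ A x -> exists phi, is_char G op phi /\
    (forall a, A a -> Tplus (phi a)) /\ ~ Tplus (phi x).

Definition locally_quasi_convex (G : AbGroup) (op : set G -> Prop) : Prop :=
  forall V, nbhd0 G op V ->
    exists W, nbhd0 G op W /\ quasi_convex G op W /\ (forall x, W x -> V x).

Definition is_hom (H G : AbGroup) (f : H -> G) : Prop :=
  forall x y, f (gadd x y) = gadd (f x) (f y).

Definition continuous_map (H G : Type) (opH : set H -> Prop) (opG : set G -> Prop)
  (f : H -> G) : Prop :=
  forall U, opG U -> opH (fun x => U (f x)).

Definition is_final_lqc (I : Type) (Gi : I -> TopGroup) (G : AbGroup)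
  (u : forall i, Gi i -> G) (op : set G -> Prop) : Prop :=
  is_group_topology G op /\ locally_quasi_convex G op /\
  (forall i, continuous_map (Gi i) G (topen (Gi i)) op (u i)) /\
  forall op' : set G -> Prop, is_group_topology G op' -> locally_quasi_convex G op' ->
    (forall i, continuous_map (Gi i) G (topen (Gi i)) op' (u i)) ->
    forall U, op' U -> op U.

From Stdlib Require Import Reals List Lra Lia ZArith Classical FunctionalExtensionality PropExtensionality.
Open Scope R_scope.

(* Let K be a compact subset of
   Gamma_s G.  We equip G with the topology tau_K of uniform convergence on
   K: a set is open when around each of its points it contains a "K-ball"
   {z | dT (phi z) (phi x) < e for all phi in K}.  We show:
   (1) tau_K is a group topology (characters are 1-Lipschitz for x - y);
   (2) tau_K is locally quasi-convex: the sets
         {y | phi (2^j y) in T_+ for all phi in K, j <= m}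
       are quasi-convex zero neighbourhoods shrinking to 0 as m grows;
   (3) each u_i is continuous into tau_K: K o u_i is compact in Gamma_s G_i,
       hence equicontinuous because G_i is g-barrelled.
   By finality tau_K is coarser than the topology of G, and every K-ball
   around 0 is then a zero neighbourhood of G, i.e. K is equicontinuous. *)

(** * Arithmetic on the circle group *)

Lemma IZR_small (z : Z) : -1 < IZR z < 1 -> z = 0%Z.
Proof.
  intros [h1 h2]. apply lt_IZR in h2. change (-1) with (IZR (-1)) in h1.
  apply lt_IZR in h1. lia.
Qed.

Lemma frac_spec r k : IZR k <= r < IZR k + 1 -> frac r = r - IZR k.
Proof.
  intros [h1 h2]. unfold frac. destruct (base_Int_part r) as [b1 b2].
  assert (E : (Int_part r - k = 0)%Z) by (apply IZR_small; rewrite minus_IZR; lra).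
  replace (Int_part r) with k by lia. reflexivity.
Qed.

Lemma Tadd_lo a b : 0 <= a + b < 1 -> Tadd a b = a + b.
Proof. intro h. unfold Tadd. rewrite (frac_spec _ 0%Z); simpl; lra. Qed.

Lemma Tadd_hi a b : 1 <= a + b < 2 -> Tadd a b = a + b - 1.
Proof. intro h. unfold Tadd. rewrite (frac_spec _ 1%Z); simpl; lra. Qed.

Lemma inT_Tadd a b : inT (Tadd a b).
Proof. unfold inT, Tadd, frac. destruct (base_Int_part (a + b)). lra. Qed.

Lemma Tadd_comm a b : Tadd a b = Tadd b a.
Proof. unfold Tadd. rewrite Rplus_comm. reflexivity. Qed.

Ltac circle_cases := unfold Tplus, inT in *;
  repeat match goal with H : _ /\ _ |- _ => destruct H end;
  repeat match goal with H : context[dT _ _] |- _ => revert H end;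
  unfold dT, Rmin, Rabs;
  repeat (match goal with
   | |- context [Rcase_abs ?x] => destruct (Rcase_abs x)
   | |- context [Rle_dec ?x ?y] => destruct (Rle_dec x y) end);
  intros; lra.

Lemma dT_refl a : dT a a = 0.
Proof. circle_cases. Qed.

Lemma dT_sym a b : dT a b = dT b a.
Proof. circle_cases. Qed.

Lemma dT_ge0 a b : inT a -> inT b -> 0 <= dT a b.
Proof. intros. circle_cases. Qed.

Lemma dT_tri a b c : inT a -> inT b -> inT c -> dT a c <= dT a b + dT b c.
Proof. intros. circle_cases. Qed.

Lemma dT_Tadd a b c : inT a -> inT b -> inT c -> dT (Tadd a c) (Tadd b c) = dT a b.
Proof.
  intros ha hb hc. unfold inT in *.
  destruct (Rlt_le_dec (a + c) 1);
    [rewrite (Tadd_lo a c) by lra | rewrite (Tadd_hi a c) by lra];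
  (destruct (Rlt_le_dec (b + c) 1);
    [rewrite (Tadd_lo b c) by lra | rewrite (Tadd_hi b c) by lra]);
  circle_cases.
Qed.

Lemma dT_double_le p q : inT p -> inT q -> dT (Tadd p p) (Tadd q q) <= 2 * dT p q.
Proof.
  intros. eapply Rle_trans; [apply (dT_tri _ (Tadd q p)); auto using inT_Tadd|].
  rewrite dT_Tadd by auto. rewrite (Tadd_comm q p), dT_Tadd by auto. lra.
Qed.

Lemma dT_double_Tplus s : Tplus s -> dT (Tadd s s) 0 = 2 * dT s 0.
Proof.
  intros h. destruct h as [h [h1|h1]]; unfold inT in h.
  - rewrite Tadd_lo by lra. circle_cases.
  - rewrite Tadd_hi by lra. circle_cases.
Qed.

Lemma Tplus_of_dT s : inT s -> dT s 0 <= 1/4 -> Tplus s.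
Proof. intros. unfold Tplus; split; auto. circle_cases. Qed.

Lemma dT_of_Tplus s : Tplus s -> dT s 0 <= 1/4.
Proof. intros h. destruct h as [h [h1|h1]]; circle_cases. Qed.

Lemma Tadd_idem t : inT t -> Tadd t t = t -> t = 0.
Proof.
  intros h e. unfold inT in h. destruct (Rlt_le_dec (t + t) 1).
  - rewrite Tadd_lo in e by lra. lra.
  - rewrite Tadd_hi in e by lra. lra.
Qed.

Lemma small_inv_pow2 e : 0 < e -> exists m : nat, / 2 ^ m < e.
Proof.
  intro he. destruct (pow_lt_1_zero (/ 2)) with (y := e) as [m hm]; auto.
  { rewrite Rabs_pos_eq; lra. }
  exists m. specialize (hm m (le_n m)). rewrite pow_inv in hm.
  rewrite Rabs_pos_eq in hm; auto. left. apply Rinv_0_lt_compat, pow_lt. lra.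
Qed.

Lemma gadd0r (G : AbGroup) (x : G) : gadd x gzero = x.
Proof. rewrite gaddC; apply gadd0. Qed.

Lemma gaddNr (G : AbGroup) (x : G) : gadd x (gopp x) = gzero.
Proof. rewrite gaddC; apply gaddN. Qed.

Lemma gadd_swap (G : AbGroup) (a b c d : G) :
  gadd (gadd a b) (gadd c d) = gadd (gadd a c) (gadd b d).
Proof. rewrite <- !gaddA. f_equal. rewrite !gaddA. f_equal. apply gaddC. Qed.

Lemma gopp_unique (G : AbGroup) (a b : G) : gadd a b = gzero -> a = gopp b.
Proof.
  intro h. transitivity (gadd a (gadd b (gopp b))).
  - rewrite gaddNr, gadd0r. reflexivity.
  - rewrite gaddA, h, gadd0. reflexivity.
Qed.

Lemma hom0 (H G : AbGroup) (f : H -> G) : is_hom H G f -> f gzero = gzero.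
Proof.
  intro hf. assert (e : f gzero = gadd (f gzero) (f gzero)) by (rewrite <- hf, gadd0; reflexivity).
  transitivity (gadd (gopp (f gzero)) (gadd (f gzero) (f gzero))).
  - rewrite gaddA, gaddN, gadd0. reflexivity.
  - rewrite <- e. apply gaddN.
Qed.

Lemma hom_opp (H G : AbGroup) (f : H -> G) x : is_hom H G f -> f (gopp x) = gopp (f x).
Proof. intro hf. apply gopp_unique. rewrite <- hf, gaddN. apply hom0; auto. Qed.

Fixpoint dbl (G : AbGroup) (j : nat) (x : G) : G :=
  match j with O => x | S j => gadd (dbl G j x) (dbl G j x) end.

Lemma dbl_hom (G : AbGroup) j (x y : G) : dbl G j (gadd x y) = gadd (dbl G j x) (dbl G j y).
Proof. induction j; simpl; auto. rewrite IHj. apply gadd_swap. Qed.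

Lemma dbl_0 (G : AbGroup) j : dbl G j gzero = gzero.
Proof. induction j; simpl; auto. rewrite IHj. apply gadd0. Qed.

(** * Homomorphisms into T (characters without continuity) *)

Definition chom (G : AbGroup) (phi : G -> R) :=
  (forall x, inT (phi x)) /\ (forall x y, phi (gadd x y) = Tadd (phi x) (phi y)).

Lemma char_chom G op phi : is_char G op phi -> chom G phi.
Proof. intros [a [b _]]. split; auto. Qed.

Section Homomorphisms_into_T.
Variable G : AbGroup.
Variable phi : G -> R.
Hypothesis hphi : chom G phi.

Lemma chom0 : phi gzero = 0.
Proof.
  destruct hphi as [hin hadd]. apply Tadd_idem; auto.
  rewrite <- hadd, gadd0. reflexivity.
Qed.

Lemma chom_dT_sub a b : dT (phi a) (phi b) = dT (phi (gadd a (gopp b))) (phi gzero).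
Proof.
  destruct hphi as [hin hadd]. rewrite <- (gaddNr _ b), !hadd.
  symmetry; apply dT_Tadd; auto.
Qed.

Lemma chom_dT_opp b y : dT (phi (gopp b)) (phi (gopp y)) = dT (phi b) (phi y).
Proof.
  destruct hphi as [hin hadd].
  rewrite <- (dT_Tadd _ _ (phi b)) by auto. rewrite <- !hadd, gaddN.
  rewrite (chom_dT_sub b y), dT_sym, (gaddC _ b). reflexivity.
Qed.

Lemma chom_dT_sub_le a b x y : dT (phi (gadd a (gopp b))) (phi (gadd x (gopp y))) <=
   dT (phi a) (phi x) + dT (phi b) (phi y).
Proof.
  destruct hphi as [hin hadd]. rewrite !hadd.
  eapply Rle_trans; [apply (dT_tri _ (Tadd (phi x) (phi (gopp b)))); auto using inT_Tadd|].
  rewrite dT_Tadd by auto. rewrite (Tadd_comm (phi x)), (Tadd_comm (phi x)), dT_Tadd by auto.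
  rewrite chom_dT_opp. lra.
Qed.

Lemma chom_dbl_lip j a b :
  dT (phi (dbl G j a)) (phi (dbl G j b)) <= 2 ^ j * dT (phi a) (phi b).
Proof.
  destruct hphi as [hin hadd]. induction j; simpl.
  - lra.
  - rewrite !hadd. eapply Rle_trans; [apply dT_double_le; auto|]. lra.
Qed.

Lemma chom_dbl_Tplus m y : (forall j, (j <= m)%nat -> Tplus (phi (dbl G j y))) ->
  dT (phi (dbl G m y)) 0 = 2 ^ m * dT (phi y) 0.
Proof.
  destruct hphi as [hin hadd]. intros hT. induction m; simpl.
  - lra.
  - rewrite hadd, dT_double_Tplus by (apply hT; lia). rewrite IHm by (intros; apply hT; lia).
    ring.
Qed.
End Homomorphisms_into_T.

Lemma open_of_local X (op : set X -> Prop) (T : is_topology X op) (P : set X) :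
  (forall z, P z -> exists O, op O /\ O z /\ forall w, O w -> P w) -> op P.
Proof.
  intro H.
  assert (E : P = fun x => exists j : {O : set X | op O /\ forall w, O w -> P w},
                             proj1_sig j x).
  { apply functional_extensionality; intro x; apply propositional_extensionality; split.
    - intro hx; destruct (H x hx) as [O [h1 [h2 h3]]].
      exists (exist _ O (conj h1 h3)); exact h2.
    - intros [[O [h1 h3]] h2]; simpl in h2; auto. }
  rewrite E. apply (top_union _ _ T). intros [O [h1 h3]]; exact h1.
Qed.

Lemma char_comp (H G : AbGroup) opH opG (f : H -> G) phi :
  is_hom H G f -> continuous_map H G opH opG f -> is_char G opG phi ->
  is_char H opH (fun g => phi (f g)).
Proof.
  intros hf hcf [hin [hadd hcont]]. split; [|split]; auto.
  - intros x y. rewrite hf. auto.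
  - intros x eps heps. destruct (hcont (f x) eps heps) as [U [hU [hUx HU]]].
    exists (fun y => U (f y)). split; auto.
Qed.

(** * The topology of uniform convergence on a set of characters *)

Section Uniform_topology.
Variable G : AbGroup.
Variable K : set (G -> R).
Hypothesis hK : forall phi, K phi -> chom G phi.

Definition ball (x : G) e (z : G) := forall phi, K phi -> dT (phi z) (phi x) < e.
Definition intr (P : set G) (y : G) := exists e, 0 < e /\ forall z, ball y e z -> P z.
Definition opK (U : set G) := forall x, U x -> intr U x.

Lemma intr_self P y : intr P y -> P y.
Proof. intros [e [he H]]. apply H. intros phi hphi. rewrite dT_refl. auto. Qed.

Lemma intr_ball y e : 0 < e -> intr (ball y e) y.
Proof. intros he. exists e. auto. Qed.

Lemma intr_open P : opK (intr P).
Proof.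
  intros y [e [he H]]. exists (e/2). split; [lra|]. intros y' hy'.
  exists (e/2). split; [lra|]. intros z hz. apply H. intros phi hphi.
  destruct (hK phi hphi) as [hin _].
  eapply Rle_lt_trans; [apply (dT_tri _ (phi y')); auto|].
  specialize (hz phi hphi). specialize (hy' phi hphi). lra.
Qed.

Lemma opK_topology : is_topology G opK.
Proof.
  split.
  - intros x _. exists 1. split; [lra|]. intros; exact I.
  - intros A B hA hB x [ha hb]. destruct (hA x ha) as [e1 [h1 H1]].
    destruct (hB x hb) as [e2 [h2 H2]]. exists (Rmin e1 e2). split.
    + apply Rmin_pos; auto.
    + intros y hy. split; [apply H1|apply H2]; intros phi hphi; specialize (hy phi hphi).
      * eapply Rlt_le_trans; [exact hy|apply Rmin_l].
      * eapply Rlt_le_trans; [exact hy|apply Rmin_r].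
  - intros J F hF x [j hj]. destruct (hF j x hj) as [e [he H]]. exists e. split; auto.
    intros y hy. exists j. auto.
Qed.

Lemma opK_group : is_group_topology G opK.
Proof.
  split; [apply opK_topology|].
  intros U x y hU hxy. destruct (hU _ hxy) as [e [he H]].
  exists (intr (ball x (e/2))), (intr (ball y (e/2))).
  repeat split; try apply intr_open; try (apply intr_ball; lra).
  intros a b ha hb. apply intr_self in ha. apply intr_self in hb.
  apply H. intros phi hphi. eapply Rle_lt_trans; [apply chom_dT_sub_le; auto|].
  specialize (ha phi hphi). specialize (hb phi hphi). lra.
Qed.

Lemma dbl_char phi j : K phi -> is_char G opK (fun g => phi (dbl G j g)).
Proof.
  intro hphi. destruct (hK phi hphi) as [hin hadd]. split; [|split]; auto.
  - intros a b. rewrite dbl_hom. auto.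
  - intros x eps heps. assert (hpj : 0 < 2 ^ j) by (apply pow_lt; lra).
    exists (intr (ball x (eps / 2 ^ j))). split; [apply intr_open|].
    split; [apply intr_ball, Rdiv_lt_0_compat; auto|].
    intros y hy. apply intr_self in hy.
    eapply Rle_lt_trans; [apply chom_dbl_lip; auto|].
    specialize (hy phi hphi).
    apply Rmult_lt_compat_l with (r := 2 ^ j) in hy; auto.
    replace (2 ^ j * (eps / 2 ^ j)) with eps in hy by (field; lra). exact hy.
Qed.

Definition qc_nbhd (m : nat) (y : G) :=
  forall phi, K phi -> forall j, (j <= m)%nat -> Tplus (phi (dbl G j y)).

Lemma qc_nbhd_quasi_convex m : quasi_convex G opK (qc_nbhd m).
Proof.
  intros x hx.
  destruct (classic (exists phi j, K phi /\ (j <= m)%nat /\ ~ Tplus (phi (dbl G j x))))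
    as [[phi [j [hphi [hj hn]]]]|hn].
  - exists (fun g => phi (dbl G j g)). split; [apply dbl_char; auto|].
    split; [intros a ha; apply ha; auto | exact hn].
  - exfalso. apply hx. intros phi hphi j hj. apply NNPP. intro hj'.
    apply hn. exists phi, j. auto.
Qed.

Lemma ball_sub_qc_nbhd m y : ball gzero (/ 4 * / 2 ^ m) y -> qc_nbhd m y.
Proof.
  intros hy phi hphi j hj. pose proof (hK phi hphi) as hc. destruct hc as [hin _].
  apply Tplus_of_dT; auto.
  pose proof (chom_dbl_lip G phi (hK phi hphi) j y gzero) as L.
  rewrite dbl_0, (chom0 _ _ (hK phi hphi)) in L.
  specialize (hy phi hphi). rewrite (chom0 _ _ (hK phi hphi)) in hy.
  assert (2 ^ j <= 2 ^ m) by (apply Rle_pow; [lra|auto]).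
  assert (0 <= dT (phi y) 0) by (apply dT_ge0; auto; unfold inT; lra).
  assert (0 < 2 ^ m) by (apply pow_lt; lra).
  assert (2 ^ j * dT (phi y) 0 <= 2 ^ m * (/ 4 * / 2 ^ m))
    by (apply Rmult_le_compat; try lra; apply pow_le; lra).
  replace (2 ^ m * (/ 4 * / 2 ^ m)) with (/ 4) in * by (field; lra). lra.
Qed.

Lemma qc_nbhd_sub_ball m y phi : qc_nbhd m y -> K phi -> dT (phi y) (phi gzero) <= / 2 ^ m.
Proof.
  intros hy hphi.
  pose proof (chom_dbl_Tplus G phi (hK phi hphi) m y (hy phi hphi)) as L.
  pose proof (dT_of_Tplus _ (hy phi hphi m (le_n m))) as L2.
  rewrite (chom0 _ _ (hK phi hphi)).
  assert (0 < 2 ^ m) by (apply pow_lt; lra).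
  replace (dT (phi y) 0) with (/ 2 ^ m * (2 ^ m * dT (phi y) 0)) by (field; lra).
  rewrite <- L. assert (0 < / 2 ^ m) by (apply Rinv_0_lt_compat; auto). nra.
Qed.

Lemma opK_lqc : locally_quasi_convex G opK.
Proof.
  intros V [U [hU [hU0 hUV]]]. destruct (hU _ hU0) as [e [he He]].
  destruct (small_inv_pow2 e he) as [m hm].
  assert (hpm : 0 < / 2 ^ m) by (apply Rinv_0_lt_compat, pow_lt; lra).
  exists (qc_nbhd m). split; [|split].
  - exists (intr (ball gzero (/ 4 * / 2 ^ m))). split; [apply intr_open|].
    split; [apply intr_ball; lra|].
    intros y hy. apply ball_sub_qc_nbhd, intr_self, hy.
  - apply qc_nbhd_quasi_convex.
  - intros y hy. apply hUV, He. intros phi hphi.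
    pose proof (qc_nbhd_sub_ball m y phi hy hphi). lra.
Qed.

Lemma equicontinuous_of_opK (op : set G -> Prop) :
  (forall V, opK V -> op V) -> equicontinuous G op K.
Proof.
  intros hfine U [eps [heps hU]].
  exists (intr (ball gzero eps)). split.
  - exists (intr (ball gzero eps)). repeat split; auto.
    + apply hfine, intr_open.
    + apply intr_ball; auto.
  - intros phi v hphi hv. apply intr_self in hv. specialize (hv phi hphi).
    rewrite (chom0 _ _ (hK phi hphi)) in hv. apply hU; auto. apply (hK phi hphi).
Qed.

Lemma opK_continuous (H : TopGroup) (f : H -> G) :
  is_hom H G f ->
  equicontinuous H (topen H) (fun psi => exists phi, K phi /\ psi = fun g => phi (f g)) ->
  continuous_map H G (topen H) opK f.
Proof.
  intros hf heq V hV. apply open_of_local; [apply (proj1 (topen_ax H))|].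
  intros z hz. destruct (hV _ hz) as [e [he He]].
  destruct (heq (fun t => dT t 0 < e)) as [W [[O [hO [hO0 hOW]]] hW]];
    [exists e; split; auto|].
  destruct (proj2 (topen_ax H) O z z hO) as [A [B [hA [hB [hAz [hBz hAB]]]]]];
    [rewrite gaddNr; exact hO0|].
  exists A. repeat split; auto. intros w hw. apply He. intros phi hphi.
  pose proof (hW (fun g => phi (f g)) (gadd w (gopp z))
     (ex_intro _ phi (conj hphi eq_refl)) (hOW _ (hAB _ _ hw hBz))) as L.
  simpl in L. rewrite (chom_dT_sub _ _ (hK phi hphi)), (chom0 _ _ (hK phi hphi)).
  rewrite hf, (hom_opp _ _ _ _ hf) in L. exact L.
Qed.
End Uniform_topology.

(* The dual map Gamma_s G -> Gamma_s H of a continuous homomorphism f is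
   continuous, so it maps compact sets to compact sets. *)
Lemma compact_s_comp (H G : AbGroup) opH opG (f : H -> G) (K : set (G -> R)) :
  is_hom H G f -> continuous_map H G opH opG f -> compact_s G opG K ->
  compact_s H opH (fun psi => exists phi, K phi /\ psi = fun g => phi (f g)).
Proof.
  intros hf hcf [hKc hKcomp]. split.
  - intros psi [phi [hphi ->]]. apply (char_comp _ _ opH opG); auto.
  - intros J F hF hcov.
    set (F' := fun j (phi : G -> R) => is_char G opG phi /\ F j (fun g => phi (f g))).
    assert (hF' : forall j, open_s G opG (F' j)).
    { intros j. split; [intros phi [h _]; exact h|].
      intros phi [hc hF0]. destruct ((proj2 (hF j)) _ hF0) as [xs [eps [heps Hx]]].
      exists (map f xs), eps. split; auto. intros psi hpsi hclose. split; auto.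
      apply Hx; [apply (char_comp _ _ opH opG); auto|].
      intros x hx. apply hclose, in_map, hx. }
    assert (hcov' : forall phi, K phi -> exists j, F' j phi).
    { intros phi hphi. destruct (hcov (fun g => phi (f g))) as [j hj]; [exists phi; auto|].
      exists j. split; auto. }
    destruct (hKcomp J F' hF' hcov') as [l hl]. exists l.
    intros psi [phi [hphi ->]]. destruct (hl phi hphi) as [j [hj [_ hFj]]]. eauto.
Qed.

Theorem corollary2p13 (I : Type) (Gi : I -> TopGroup) (G : TopGroup)
  (u : forall i, Gi i -> G) :
  (forall i, is_hom (Gi i) G (u i)) ->
  (forall i, g_barrelled (Gi i)) ->
  is_final_lqc I Gi G u (topen G) ->
  g_barrelled G.
Proof.
  intros hom hbar [_ [_ [hcont hfin]]] K hKcomp.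
  assert (hK : forall phi, K phi -> chom G phi)
    by (intros phi hphi; eapply char_chom, (proj1 hKcomp); eauto).
  apply equicontinuous_of_opK; auto.
  apply hfin.
  - apply opK_group; auto.
  - apply opK_lqc; auto.
  - intros i. apply opK_continuous; auto.
    apply hbar, (compact_s_comp _ _ _ (topen G)); auto.
Qed.
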